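(* Let $N\ge 5$ be odd. Let $G_{N,2}$ be the graph with vertex set $\mathbb Z_N$ in which two distinct vertices $x,y$ are adjacent iff $y-x\not\equiv\pm2\pmod N$. Put $\Delta=\sqrt{N(N-4)}$, $\rho=\frac{N-2+\Delta}{2}$. Then $G_{N,2}$ is $(N-3)$-regular with $\frac{N(N-3)}{2}$ edges, and for $u,v\in\mathbb Z_N$, with $q\equiv v-u\pmod N$, $s\equiv 2^{-1}\pmod N$, $\delta_2(q)=\min\{sq\bmod N,\;N-(sq\bmod N)\}$, the expected hitting time of $v$ by the simple random walk on $G_{N,2}$ started at $u$ satisfies $H^{(2)}(u,v)=\frac{N(N-3)}{2}R^{(2)}(u,v)$, where $R^{(2)}$ is effective resistance in $G_{N,2}$, and explicitly \[ H^{(2)}(u,v)=\frac{N(N-3)}{\Delta(\rho^N+1)}\left\{\rho^N-1+(-1)^{\delta_2(q)}\left(\rho^{\delta_2(q)}-\rho^{N-\delta_2(q)}\right)\right\}. \]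
   Context: The simple random walk moves to a uniformly random neighbour at each step; effective resistance uses unit conductance on every edge. *)

From HB Require Import structures.
From mathcomp Require Import all_boot all_order all_algebra.
From mathcomp Require Import all_classical all_reals all_analysis.
Set Implicit Arguments. Unset Strict Implicit. Unset Printing Implicit Defensive.
Import Order.TTheory GRing.Theory Num.Theory.
Import numFieldNormedType.Exports.
Local Open Scope ring_scope.

Definition adjG (N : nat) (x y : 'I_N) : bool :=
  [&& x != y, ((y + N - x) %% N != 2)%N & ((y + N - x) %% N != N - 2)%N].

Definition degG (N : nat) (x : 'I_N) : nat := #|[set y | adjG x y]|.

Definition edgesG (N : nat) : {set {set 'I_N}} :=
  [set [set x; y] | x in 'I_N, y in 'I_N & adjG x y].

Section Walk.
Variables (R : realType) (N : nat).

Definition transG : 'M[R]_N :=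
  \matrix_(x, y) (if adjG x y then (degG x)%:R^-1 else 0).

Definition avoid (v : 'I_N) : 'M[R]_N :=
  \matrix_(x, y) (if (x == y) && (x != v) then 1 else 0).

(* P_u(T_v > t), T_v = min {t >= 0 : X_t = v} *)
Definition survival (u v : 'I_N) (t : nat) : R :=
  \sum_(y < N) (avoid v *m (transG *m avoid v) ^+ t) u y.

(* expected hitting time E_u[T_v] = sum_{t >= 0} P_u(T_v > t) *)
Definition hitting_time (u v : 'I_N) : R :=
  limn (series (survival u v)).

Definition laplacianG : 'M[R]_N :=
  \matrix_(x, y) ((if x == y then (degG x)%:R else 0) - (adjG x y)%:R).

Definition unitv (x : 'I_N) : 'rV[R]_N := \row_y (if y == x then 1 else 0).

(* effective resistance: b L^- b^T with b = e_u - e_v and L^- a generalized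
   inverse (pinvmx) of the Laplacian *)
Definition eff_resistance (u v : 'I_N) : R :=
  let b := unitv u - unitv v in (b *m pinvmx laplacianG *m b^T) 0 0.

End Walk.

(* Multiplication by s = 1/2 in Z_N sends the forbidden differences +-2 to +-1,
   so G_{N,2} is the complement of the N-cycle: it is (N-3)-regular and the
   handshake lemma counts its edges.  Relabelling x by k = s(v - x), the
   hitting time of v becomes a function G of k alone, and the first-step
   equations read  sum_i G i - (G (k-1) + G k + G (k+1)) = (N-3)(G k - 1)
   for 0 < k < N: a second-order linear recurrence whose characteristic roots
   are rho and 1/rho, solved with G 0 = G N = 0; oddness of N makes
   G (N-k) = G k.  A nonnegative solution of the first-step equations is the
   hitting time because the walk killed at v maps h to at most
   (1 - 1/(1 + sum h)) h, so the tail of the survival series vanishes.  Finally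
   L (h_v - h_u) = 2|E| (e_u - e_v) gives the commute-time identity
   R(u,v) = (h_v(u) + h_u(v)) / 2|E|, and symmetry of G gives H = |E| R. *)

From HB Require Import structures.
From mathcomp Require Import all_boot all_order all_algebra.
From mathcomp Require Import all_classical all_reals all_analysis.
From mathcomp Require Import ring lra.
Set Implicit Arguments. Unset Strict Implicit. Unset Printing Implicit Defensive.
Import Order.TTheory GRing.Theory Num.Theory.
Import numFieldNormedType.Exports.
Local Open Scope ring_scope.

Section Handshake.
Variables (T : finType) (r : rel T).
Hypotheses (r_irr : irreflexive r) (r_sym : symmetric r).

Let arcs := [set p : T * T | r p.1 p.2].
Let ends (p : T * T) : {set T} := [set p.1; p.2].

Lemma edges_imset_arcs :
  [set [set x; y] | x in T, y in T & r x y] = ends @: arcs.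
Proof.
apply/setP => e; apply/imset2P/imsetP => [[x y _]|[[x y]]].
  by rewrite !inE => rxy ->; exists (x, y); rewrite ?inE.
by rewrite inE => rxy ->; exists x y; rewrite ?inE.
Qed.

Lemma arcs_with_ends x y : r x y ->
  [set p in arcs | ends p == [set x; y]] = [set (x, y); (y, x)].
Proof.
move=> rxy; apply/setP => -[a b]; rewrite !inE /ends !xpair_eqE /=.
apply/andP/orP => [[rab /eqP Eab]|[/andP[/eqP-> /eqP->]|/andP[/eqP-> /eqP->]]].
- have ab : a != b by apply: contraTneq rab => ->; rewrite r_irr.
  have := set21 a b; have := set22 a b; rewrite Eab => /set2P[] hb /set2P[] ha;
    subst; rewrite ?eqxx // in ab *; by [left | right].
- by split; rewrite ?eqxx.
- by split; rewrite 1?r_sym // finset.setUC.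
Qed.

Lemma handshake :
  (#|[set [set x; y] | x in T, y in T & r x y]| * 2 = \sum_x #|[set y | r x y]|)%N.
Proof.
have -> : (\sum_x #|[set y | r x y]| = #|arcs|)%N.
  under eq_bigr => x _ do rewrite -sum1_card.
  by rewrite pair_big_dep -sum1_card; apply: eq_bigl => p; rewrite !inE.
rewrite edges_imset_arcs -sum_nat_const -[#|arcs|]sum1_card (partition_big_imset ends) /=.
apply: eq_bigr => e /imsetP[[x y]]; rewrite inE => /= rxy ->.
rewrite sum1dep_card -[[set _ | _]]/[set p in arcs | ends p == [set x; y]].
rewrite arcs_with_ends // cards2 xpair_eqE.
by case: eqP rxy => // ->; rewrite r_irr.
Qed.

End Handshake.

Section ContractiveFixpoint.
Local Open Scope classical_set_scope.
Variables (R : realType) (k : nat) (M : 'M[R]_k) (a h : 'cV[R]_k) (c : R).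
Hypotheses (h_fix : h = a + M *m h) (M_ge0 : forall i j, 0 <= M i j).
Hypotheses (h_ge0 : forall i, 0 <= h i 0) (c_ge0 : 0 <= c) (c_lt1 : c < 1).
Hypothesis Mh_le : forall i, (M *m h) i 0 <= c * h i 0.

Lemma fixpoint_unfold t : h = \sum_(s < t) M ^+ s *m a + M ^+ t *m h.
Proof.
elim: t => [|t IH]; first by rewrite big_ord0 expr0 mul1mx add0r.
by rewrite big_ord_recr /= -addrA exprSr -mulmxE -mulmxA -mulmxDr -h_fix.
Qed.

Lemma fixpoint_tail_bound t i : 0 <= (M ^+ t *m h) i 0 <= c ^+ t * h i 0.
Proof.
elim: t i => [|t IH] i; first by rewrite expr0 mul1mx mul1r lexx h_ge0.
rewrite exprS -mulmxE -mulmxA mxE; apply/andP; split.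
  by apply: sumr_ge0 => j _; rewrite mulr_ge0 //; case/andP: (IH j).
apply: (@le_trans _ _ (\sum_j M i j * (c ^+ t * h j 0))).
  by apply: ler_sum => j _; rewrite ler_wpM2l //; case/andP: (IH j).
under eq_bigr => j _ do rewrite mulrCA.
rewrite -mulr_sumr exprS -mulrA mulrCA ler_wpM2l ?exprn_ge0 //.
by have := Mh_le i; rewrite mxE.
Qed.

Lemma fixpoint_series_cvg i :
  (fun t => \sum_(s < t) (M ^+ s *m a) i 0) @ \oo --> h i 0.
Proof.
have -> : (fun t => \sum_(s < t) (M ^+ s *m a) i 0) =
          (fun t => h i 0 - (M ^+ t *m h) i 0).
  by apply: funext => t; rewrite {1}(fixpoint_unfold t) mxE summxE addrK.
rewrite -[X in _ --> X]subr0; apply: cvgB; first exact: cvg_cst.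
apply: (@squeeze_cvgr _ _ _ _ (fun=> 0) (fun t => h i 0 * c ^+ t)).
- by near=> t; rewrite mulrC; exact: fixpoint_tail_bound.
- exact: cvg_cst.
- have := @cvg_geometric R (h i 0) c; rewrite ger0_norm // => /(_ c_lt1).
  by apply: cvg_trans; apply: near_eq_cvg; near=> t.
Unshelve. all: end_near.
Qed.

End ContractiveFixpoint.

Section HittingTime.
Local Open Scope classical_set_scope.
Variables (R : realType) (N : nat).

Lemma mul_avoid_mx p (v : 'I_N) (B : 'M[R]_(N, p)) x j :
  (avoid R v *m B) x j = if x != v then B x j else 0.
Proof.
rewrite mxE (bigD1 x) //= big1 ?addr0 => [|y y_neq_x]; last first.
  by rewrite mxE eq_sym (negbTE y_neq_x) mul0r.
by rewrite mxE eqxx /=; case: (x != v); rewrite ?mul1r ?mul0r.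
Qed.

Lemma transG_ge0 x y : 0 <= transG R N x y.
Proof. by rewrite mxE; case: adjG; rewrite ?invr_ge0 ?ler0n. Qed.

Lemma mulmx_exp_swap (A B : 'M[R]_N) t : A *m (B *m A) ^+ t = (A *m B) ^+ t *m A.
Proof.
elim: t => [|t IH]; first by rewrite !expr0 mulmx1 mul1mx.
by rewrite !exprS -!mulmxE -(mulmxA B) IH !mulmxA.
Qed.

Lemma sum_adjG_transG (f : 'I_N -> R) x :
  \sum_y (adjG x y)%:R * f y = (degG x)%:R * \sum_y transG R N x y * f y.
Proof.
rewrite mulr_sumr; apply: eq_bigr => y _; rewrite mxE.
case: (boolP (adjG x y)) => [adj_xy|]; last by rewrite !mul0r mulr0.
have deg_gt0 : (0 < degG x)%N by apply/card_gt0P; exists y; rewrite inE.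
by rewrite mulrA mulfV ?mul1r // pnatr_eq0 -lt0n.
Qed.

Variables (v : 'I_N) (h : 'I_N -> R).
Hypotheses (h_v : h v = 0) (h_ge0 : forall x, 0 <= h x).
Hypothesis h_step : forall x, x != v -> \sum_y transG R N x y * h y = h x - 1.

Let hv : 'cV[R]_N := \col_x h x.
Let Mv : 'M[R]_N := avoid R v *m transG R N.
Let av : 'cV[R]_N := avoid R v *m const_mx 1.

Let transG_hv x : x != v -> (transG R N *m hv) x 0 = h x - 1.
Proof. by move=> /h_step <-; rewrite mxE; apply: eq_bigr => y _; rewrite /hv !mxE. Qed.

Let hv_fix : hv = av + Mv *m hv.
Proof.
apply/matrixP => x j; rewrite ord1 /Mv -mulmxA [RHS]mxE !mul_avoid_mx /hv mxE.
case: eqVneq => [->|/transG_hv->] /=; first by rewrite h_v addr0.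
by rewrite mxE addrC subrK.
Qed.

Let Mv_ge0 x y : 0 <= Mv x y.
Proof. by rewrite mul_avoid_mx; case: ifP => // _; apply: transG_ge0. Qed.

Let K := 1 + \sum_x h x.

Let K_ge1 : 1 <= K.
Proof. by rewrite lerDl sumr_ge0. Qed.

Let Mv_contract x : (Mv *m hv) x 0 <= (1 - K^-1) * hv x 0.
Proof.
have K_gt0 : 0 < K by have := K_ge1; lra.
have hx_le : h x <= K.
  by rewrite /K (bigD1 x) //= addrCA lerDl addr_ge0 // sumr_ge0.
rewrite /Mv -mulmxA mul_avoid_mx /hv mxE; case: eqVneq => [->|/transG_hv->] /=.
  by rewrite h_v mulr0.
by rewrite mulrBl mul1r lerD2l lerN2 mulrC ler_pdivrMr // mul1r.
Qed.

Lemma hitting_time_cvg u : series (survival R u v) @ \oo --> h u.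
Proof.
have K_gt0 : 0 < K by have := K_ge1; lra.
have Kinv_gt0 : 0 < K^-1 by rewrite invr_gt0.
have Kinv_le1 : K^-1 <= 1 by rewrite invf_le1 // K_ge1.
have c_ge0 : 0 <= 1 - K^-1 by lra.
have c_lt1 : 1 - K^-1 < 1 by lra.
have survivalE t : survival R u v t = (Mv ^+ t *m av) u 0.
  rewrite /survival /Mv /av mulmx_exp_swap mulmxA [RHS]mxE.
  by apply: eq_bigr => y _; rewrite [const_mx 1 y 0]mxE mulr1.
have hv_ge0 i : 0 <= hv i 0 by rewrite mxE.
have := fixpoint_series_cvg hv_fix Mv_ge0 hv_ge0 c_ge0 c_lt1 Mv_contract (i := u).
rewrite /hv mxE; apply: cvg_trans; apply: near_eq_cvg; near=> t.
by rewrite /series /= big_mkord; apply: eq_bigr => s _; rewrite survivalE.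
Unshelve. all: end_near.
Qed.

End HittingTime.

Section CommuteTime.
Variables (R : realType) (N : nat).
Hypothesis adjG_symN : symmetric (@adjG N).

Let L := laplacianG R N.
Let D : R := (\sum_(x : 'I_N) degG x)%:R.

Lemma laplacianG_sym : L^T = L.
Proof.
apply/matrixP => x y; rewrite !mxE adjG_symN.
by case: eqVneq => [->|]; rewrite ?eqxx // eq_sym => /negbTE->.
Qed.

Lemma laplacianG_row_sum x : \sum_y L x y = 0.
Proof.
under eq_bigr => y _ do rewrite mxE.
rewrite sumrB (bigD1 x) //= eqxx big1 ?addr0 => [|y]; last by rewrite eq_sym => /negbTE->.
rewrite /degG -sum1dep_card natr_sum big_mkcond /= -sumrB.
by rewrite big1 // => y _; case: adjG; rewrite subrr.
Qed.

Variable h : 'I_N -> 'I_N -> R.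
Hypothesis h_id : forall w, h w w = 0.
Hypothesis h_step : forall w x, x != w -> \sum_y transG R N x y * h w y = h w x - 1.

Let hvec w : 'cV[R]_N := \col_x h w x.

Lemma laplacianG_hit w x : (L *m hvec w) x 0 = (degG x)%:R - (x == w)%:R * D.
Proof.
have off y : y != w -> (L *m hvec w) y 0 = (degG y)%:R.
  move=> y_neq_w; rewrite mxE; under eq_bigr => z _ do rewrite !mxE mulrBl.
  rewrite sumrB (bigD1 y) //= eqxx big1 ?addr0 => [|z]; last first.
    by rewrite eq_sym => /negbTE->; rewrite mul0r.
  by rewrite sum_adjG_transG h_step //; ring.
case: eqVneq => [->|/off->]; last by rewrite mul0r subr0.
have total : \sum_i (L *m hvec w) i 0 = 0.
  under eq_bigr => i _ do rewrite mxE.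
  rewrite exchange_big big1 //= => j _.
  rewrite -mulr_suml -[L]laplacianG_sym.
  under eq_bigr => i _ do rewrite mxE.
  by rewrite laplacianG_row_sum mul0r.
have others : \sum_(i | i != w) (L *m hvec w) i 0 = D - (degG w)%:R.
  by rewrite (eq_bigr _ off) -natr_sum /D [in RHS](bigD1 w) //= natrD addrC addKr.
move: total; rewrite (bigD1 w) //= others mul1r => /eqP; rewrite addr_eq0 => /eqP->.
by rewrite opprB.
Qed.

Lemma unitvE (x : 'I_N) : unitv R x = delta_mx 0 x.
Proof. by apply/matrixP => i j; rewrite !mxE (ord1 i) eqxx; case: eqP. Qed.

Lemma eff_resistance_commute u v : (0 < \sum_(x : 'I_N) degG x)%N ->
  eff_resistance R u v = (h v u + h u v) / (\sum_(x : 'I_N) degG x)%:R.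
Proof.
move=> D_gt0; have D_neq0 : D != 0 by rewrite pnatr_eq0 -lt0n.
set b := unitv R u - unitv R v; set z := hvec v - hvec u.
have Lz : L *m z = D *: b^T.
  apply/matrixP => x j; rewrite ord1 mulmxBr [LHS]mxE [X in _ + X = _]mxE.
  rewrite !laplacianG_hit !mxE.
  by case: (x == u); case: (x == v); rewrite /= ?mul0r ?mul1r; ring.
have yL : (D^-1 *: z^T) *m L = b.
  rewrite -scalemxAl -[in z^T *m L]laplacianG_sym -trmx_mul Lz linearZ /= trmxK.
  by rewrite scalerA mulVf // scale1r.
have b_sub : (b <= L)%MS by rewrite -yL submxMl.
have bT : b^T = L *m (D^-1 *: z^T)^T by rewrite -yL trmx_mul laplacianG_sym.
rewrite /eff_resistance -/b bT mulmxA (mulmxKpV b_sub) mulmxBl !unitvE -!rowE !mxE.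
by rewrite !h_id -/D; field.
Qed.

End CommuteTime.

Section ComplementCycle.
Variable n : nat.
Local Notation N := n.+2.
Hypothesis N_ge5 : (5 <= N)%N.

Lemma val_natZp k : (k < N)%N -> val (k%:R : 'I_N) = k.
Proof. by move=> kN; rewrite Zp_nat /= modn_small. Qed.

Lemma natZp_neq0 k : (0 < k < N)%N -> (k%:R : 'I_N) != 0.
Proof. by case/andP=> k_gt0 kN; rewrite -val_eqE val_natZp //= -lt0n. Qed.

Lemma val_subZp (x y : 'I_N) : val (y - x : 'I_N) = ((y + N - x) %% N)%N.
Proof. by rewrite /= modnDmr addnBA //; apply: ltnW. Qed.

Lemma adjGE (x y : 'I_N) : adjG x y = [&& y != x, y != x + 2%:R & y != x - 2%:R].
Proof.
set two : 'I_N := 2%:R.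
have val2 : val two = 2%N by rewrite val_natZp //; apply: leq_trans N_ge5.
have valN2 : val (- two) = (N - 2)%N.
  by rewrite -sub0r val_subZp val2 add0n modn_small // ltn_subrL.
by rewrite /adjG -val_subZp eq_sym -valN2 -val2 !val_eqE !subr_eq !(addrC _ x).
Qed.

Lemma adjG_sym : symmetric (@adjG N).
Proof.
have E (a b : 'I_N) : (b == a + 2%:R) = (a == b - 2%:R) by rewrite [RHS]eq_sym subr_eq.
by move=> x y; rewrite !adjGE (E x y) -(E y x) eq_sym (andbC (x != y - _)).
Qed.

Lemma nonadj_notin (x : 'I_N) : x \notin [set x + 2%:R; x - 2%:R].
Proof.
have two_neq0 : (2%:R : 'I_N) != 0 by rewrite natZp_neq0 //; apply: leq_trans N_ge5.
by rewrite !inE negb_or -!(subr_eq0 x) subKr opprD addrA subrr sub0r oppr_eq0 two_neq0.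
Qed.

Lemma nonadj_neq (x : 'I_N) : x + 2%:R != x - 2%:R.
Proof.
by rewrite -subr_eq0 (addrC x) addrKA opprK -natrD natZp_neq0.
Qed.

Lemma nonadjE (x : 'I_N) :
  [set x; x + 2%:R; x - 2%:R] = x |: [set x + 2%:R; x - 2%:R].
Proof. by rewrite finset.setUA. Qed.

Lemma adjG_setC (x : 'I_N) : [set y | adjG x y] = ~: [set x; x + 2%:R; x - 2%:R].
Proof. by apply/setP => y; rewrite !inE adjGE !negb_or andbA. Qed.

Lemma degG_eq (x : 'I_N) : degG x = (N - 3)%N.
Proof.
rewrite /degG adjG_setC cardsCs finset.setCK card_ord nonadjE cardsU1 nonadj_notin cards2.
by rewrite nonadj_neq.
Qed.

Lemma card_edgesG : #|edgesG N| = ((N * (N - 3)) %/ 2)%N.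
Proof.
have adjG_irr : irreflexive (@adjG N) by move=> x; rewrite /adjG eqxx.
have handshake : (#|edgesG N| * 2 = \sum_(x < N) degG x)%N.
  exact: (handshake adjG_irr adjG_sym).
rewrite (eq_bigr _ (fun x _ => degG_eq x)) sum_nat_const card_ord in handshake.
by rewrite -handshake mulnK.
Qed.

Lemma sum_adjG (R : pzRingType) (f : 'I_N -> R) (x : 'I_N) :
  \sum_y (adjG x y)%:R * f y = \sum_y f y - (f x + f (x + 2%:R) + f (x - 2%:R)).
Proof.
set S := [set x; x + 2%:R; x - 2%:R].
have sumS : \sum_(y in S) f y = f x + f (x + 2%:R) + f (x - 2%:R).
  rewrite /S nonadjE big_setU1 ?nonadj_notin // big_setU1 ?inE ?nonadj_neq //.
  by rewrite big_set1 -addrA.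
have adjS y : adjG x y = (y \notin S) by have /setP/(_ y) := adjG_setC x; rewrite !inE.
rewrite -sumS [\sum_y f y](bigID [in S]) /= addrC addrK [RHS]big_mkcond.
by apply: eq_bigr => y _; rewrite adjS; case: (y \in S); rewrite ?mul0r ?mul1r.
Qed.

End ComplementCycle.

Section AlternatingSums.
Variables (R : comPzRingType) (N : nat) (x : R).
Hypothesis N_odd : odd N.

Lemma sign_subn k : (k <= N)%N -> (-1) ^+ (N - k) = - (-1) ^+ k :> R.
Proof. by move=> kN; rewrite -signr_odd oddB // N_odd signrN signr_odd. Qed.

Lemma alt_geometric : (1 + x) * \sum_(k < N) (- x) ^+ k = 1 + x ^+ N.
Proof.
have := subrX1 (- x) N; rewrite exprNn -signr_odd N_odd expr1 => geom.
have -> : 1 + x = - (- x - 1) by rewrite opprB opprK.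
by rewrite mulNr -geom opprB mulN1r opprK.
Qed.

Lemma alt_sum_rev :
  \sum_(k < N) (-1) ^+ k * x ^+ (N - k) = x * \sum_(k < N) (- x) ^+ k.
Proof.
rewrite big_distrr (reindex_inj rev_ord_inj) /=; apply: eq_bigr => k _.
have kN := ltn_ord k.
rewrite subKn // sign_subn // -signr_odd oddS signrN signr_odd opprK.
by rewrite [(- x) ^+ _]exprNn exprS mulrCA.
Qed.

End AlternatingSums.

Section HittingProfile.
Variables (R : rcfType) (N : nat).
Hypotheses (N_ge5 : (5 <= N)%N) (N_odd : odd N).

Definition Delta : R := Num.sqrt (N%:R * (N%:R - 4)).
Definition rho : R := (N%:R - 2 + Delta) / 2.
Definition profile_scale : R := (N * (N - 3))%:R / (Delta * (rho ^+ N + 1)).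
Definition hit_profile (k : nat) : R :=
  profile_scale * (rho ^+ N - 1 + (-1) ^+ k * (rho ^+ k - rho ^+ (N - k))).

Local Notation G := hit_profile.

Let N_ge5R : 5 <= N%:R :> R.
Proof. by rewrite (ler_nat R 5 N). Qed.

Lemma Delta_sqr : Delta ^+ 2 = N%:R * (N%:R - 4).
Proof. by have := N_ge5R => ?; rewrite sqr_sqrtr // mulr_ge0 //; lra. Qed.

Lemma Delta_gt0 : 0 < Delta.
Proof. by have := N_ge5R => ?; rewrite sqrtr_gt0 mulr_gt0 //; lra. Qed.

Lemma rho_sqr : rho ^+ 2 = (N%:R - 2) * rho - 1.
Proof. by rewrite /rho expr_div_n sqrrD Delta_sqr; field. Qed.

Lemma rho_ge1 : 1 <= rho.
Proof. by have := Delta_gt0; have := N_ge5R; rewrite /rho; lra. Qed.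

Lemma Delta_rho : N%:R * (rho - 1) = Delta * (rho + 1).
Proof.
transitivity ((Delta ^+ 2 + N%:R * Delta) / 2); first by rewrite Delta_sqr /rho; field.
by rewrite /rho; field.
Qed.

Lemma profile_scale_ge0 : 0 <= profile_scale.
Proof.
have rhoN_gt0 : 0 < rho ^+ N + 1 by have := exprn_ege1 N rho_ge1; lra.
by rewrite divr_ge0 // mulr_ge0 // ltW // Delta_gt0.
Qed.

Lemma hit_profile0 : G 0 = 0.
Proof. by rewrite /G expr0 subn0 mul1r; ring. Qed.

Lemma hit_profileN : G N = 0.
Proof. by rewrite /G subnn expr0 -signr_odd N_odd; ring. Qed.

Lemma hit_profile_subn k : (k <= N)%N -> G (N - k) = G k.
Proof. by move=> kN; rewrite /G subKn // sign_subn //; ring. Qed.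

Lemma hit_profile_ge0 k : (k <= N)%N -> 0 <= G k.
Proof.
move=> kN; rewrite mulr_ge0 ?profile_scale_ge0 //.
have rhok_ge1 := exprn_ege1 k rho_ge1.
have rhoNk_ge1 := exprn_ege1 (N - k) rho_ge1.
have rhok_le : rho ^+ k <= rho ^+ N by rewrite ler_weXn2l ?rho_ge1.
have rhoNk_le : rho ^+ (N - k) <= rho ^+ N by rewrite ler_weXn2l ?rho_ge1 ?leq_subr.
by rewrite -signr_odd; case: (odd k); rewrite ?expr0 ?expr1; lra.
Qed.

Lemma hit_profile_rec j : (j.+2 <= N)%N ->
  G j + G j.+2 + (N%:R - 2) * G j.+1 = profile_scale * N%:R * (rho ^+ N - 1).
Proof.
move=> jN; rewrite /G.
have -> : (N - j = (N - j.+2).+2)%N by rewrite subnSK 1?subnSK // ltnW.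
have -> : (N - j.+1 = (N - j.+2).+1)%N by rewrite subnSK.
rewrite !exprS !(mulrA rho rho) -expr2 rho_sqr.
ring.
Qed.

Lemma hit_profile_sum :
  \sum_(k < N) G k = profile_scale * N%:R * (rho ^+ N - 1) - (N%:R - 3).
Proof.
set T := \sum_(k < N) (- rho) ^+ k.
have sumE : \sum_(k < N) G k =
    profile_scale * N%:R * (rho ^+ N - 1) + profile_scale * ((1 - rho) * T).
  rewrite -mulr_sumr -mulrA -mulrDr; congr (_ * _).
  under eq_bigr => k _ do rewrite mulrBr -exprNn.
  rewrite big_split /= !sumrB !sumr_const card_ord (alt_sum_rev _ N_odd) -/T.
  by rewrite -[rho ^+ N *+ N]mulr_natr; ring.
have rho1_gt0 : 0 < 1 + rho by have := rho_ge1; lra.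
have rhoN1_gt0 : 0 < rho ^+ N + 1 by have := exprn_ege1 N rho_ge1; lra.
have N_gt0 : 0 < N%:R :> R by have := N_ge5R; lra.
have Delta_neq0 : Delta != 0 by rewrite gt_eqF ?Delta_gt0.
have T_eq : T = (1 + rho ^+ N) / (1 + rho).
  by rewrite -(alt_geometric _ N_odd) mulrC mulKf ?gt_eqF.
have rho_1 : 1 - rho = - (Delta * (rho + 1)) / N%:R.
  by rewrite -Delta_rho; field; rewrite gt_eqF.
rewrite sumE T_eq rho_1 /profile_scale natrM natrB ?(leq_trans _ N_ge5) //.
by field; rewrite Delta_neq0 !gt_eqF // addrC.
Qed.

Lemma hit_profile_harmonic k : (0 < k < N)%N ->
  \sum_(i < N) G i - (G k + G k.-1 + G k.+1) = (N%:R - 3) * (G k - 1).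
Proof.
case: k => [|j] //= jN; rewrite hit_profile_sum.
have := hit_profile_rec jN; lra.
Qed.

Lemma hit_profile_minn k : (k <= N)%N -> G (minn k (N - k)) = G k.
Proof. by move=> kN; rewrite /minn; case: ltnP => // _; rewrite hit_profile_subn. Qed.

End HittingProfile.

Section HitFunction.
Variables (R : rcfType) (n : nat).
Local Notation N := n.+2.
Hypotheses (N_ge5 : (5 <= N)%N) (N_odd : odd N).
Variable s : nat.
Hypothesis two_s : ((2 * s) %% N = 1)%N.

Local Notation G := (hit_profile R N).

Lemma hit_profile_oppZp (a : 'I_N) : G (- a : 'I_N)%R = G a.
Proof.
have [->|a_neq0] := eqVneq a 0; first by rewrite oppr0.
have a_gt0 : (0 < a)%N by rewrite lt0n.
by rewrite /= modn_small ?ltn_subrL ?a_gt0 // (hit_profile_subn _ N_odd) // ltnW.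
Qed.

Lemma hit_profile_addZp1 (a : 'I_N) : G (a + 1 : 'I_N)%R = G (val a).+1.
Proof.
rewrite /= [X in (_ + X)%N]modn_small // addn1.
have [aN|] := ltnP (val a).+1 N; first by rewrite modn_small.
rewrite leq_eqVlt ltnNge ltn_ord orbF => /eqP <-.
by rewrite modnn hit_profile0 hit_profileN.
Qed.

Lemma val_subZp1 (a : 'I_N) : a != 0 -> val (a - 1) = (val a).-1.
Proof.
move=> a_neq0; have a_gt0 : (0 < a)%N by rewrite lt0n.
rewrite (@sub_Zp_1 N a) /= -{1}(prednK a_gt0) addSn modnDr modn_small //.
exact: leq_ltn_trans (leq_pred a) (ltn_ord a).
Qed.

Definition half : 'I_N := s%:R.
Definition hit_index (v x : 'I_N) : 'I_N := half * (v - x).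
Definition hit_fun (v x : 'I_N) : R := G (hit_index v x).

Lemma half_mulrn2 : half *+ 2 = 1.
Proof.
by apply: val_inj; rewrite -mulr_natr -natrM Zp_nat /= mulnC two_s modn_small.
Qed.

Lemma hit_index_inj (v : 'I_N) : injective (hit_index v).
Proof.
move=> x y /(congr1 (fun z => z *+ 2)); rewrite /hit_index -!mulrnAl half_mulrn2 !mul1r.
by move=> /addrI /oppr_inj.
Qed.

Lemma hit_indexD2 (v x : 'I_N) : hit_index v (x + 2%:R) = hit_index v x - 1.
Proof.
have shift (T : pzRingType) (h a : T) : h *+ 2 = 1 -> h * (a - 2%:R) = h * a - 1.
  by move=> h2; rewrite mulrBr mulr_natr h2.
by rewrite /hit_index opprD addrA; apply: shift half_mulrn2.
Qed.

Lemma hit_indexB2 (v x : 'I_N) : hit_index v (x - 2%:R) = hit_index v x + 1.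
Proof.
have shift (T : pzRingType) (h a : T) : h *+ 2 = 1 -> h * (a + 2%:R) = h * a + 1.
  by move=> h2; rewrite mulrDr mulr_natr h2.
by rewrite /hit_index opprB addrCA addrC; apply: shift half_mulrn2.
Qed.

Lemma hit_index_eq0 (v x : 'I_N) : (hit_index v x == 0) = (x == v).
Proof. by rewrite -[x == v](inj_eq (@hit_index_inj v)) /hit_index subrr mulr0. Qed.

Lemma hit_fun_id (v : 'I_N) : hit_fun v v = 0.
Proof. by rewrite /hit_fun /hit_index subrr mulr0 hit_profile0. Qed.

Lemma hit_fun_ge0 (v x : 'I_N) : 0 <= hit_fun v x.
Proof. exact/hit_profile_ge0/ltnW/ltn_ord. Qed.

Lemma hit_fun_sym (u v : 'I_N) : hit_fun v u = hit_fun u v.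
Proof. by rewrite /hit_fun /hit_index -opprB mulrN hit_profile_oppZp. Qed.

Lemma hit_fun_harmonic (v x : 'I_N) : x != v ->
  \sum_y (adjG x y)%:R * hit_fun v y = (N%:R - 3) * (hit_fun v x - 1).
Proof.
rewrite -hit_index_eq0 => a_neq0.
have a_range : (0 < hit_index v x < N)%N by rewrite lt0n a_neq0 ltn_ord.
rewrite sum_adjG // /hit_fun hit_indexD2 hit_indexB2 val_subZp1 // hit_profile_addZp1.
rewrite -(reindex_inj (@hit_index_inj v) (P := xpredT) (F := fun i : 'I_N => G i)) /=.
exact: hit_profile_harmonic.
Qed.

Lemma hit_funE (u v : 'I_N) (k := ((s * ((v + N - u) %% N)) %% N)%N) :
  hit_fun v u = G (minn k (N - k)).
Proof.
rewrite (hit_profile_minn _ N_odd) ?(ltnW (ltn_pmod _ _)) //.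
rewrite /hit_fun -[val (hit_index v u)]/((val half * val (v - u)%R) %% N)%N.
by rewrite val_subZp /half Zp_nat /= modnMml.
Qed.

End HitFunction.

Lemma transG_hit_fun (R : realType) n s (v x : 'I_n.+2) :
  (5 <= n.+2)%N -> odd n.+2 -> ((2 * s) %% n.+2 = 1)%N -> x != v ->
  \sum_y transG R n.+2 x y * hit_fun R s v y = hit_fun R s v x - 1.
Proof.
move=> N_ge5 N_odd two_s x_neq_v.
have degE : (degG x)%:R = n.+2%:R - 3 :> R.
  by rewrite degG_eq // natrB // (leq_trans _ N_ge5).
have N3_neq0 : n.+2%:R - 3 != 0 :> R.
  by rewrite -degE pnatr_eq0 degG_eq // subn_eq0 -ltnNge (leq_trans _ N_ge5).
have := hit_fun_harmonic R N_ge5 N_odd two_s x_neq_v.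
by rewrite sum_adjG_transG degE; apply: mulfI.
Qed.

Theorem corollary4p4 (R : realType) (N : nat) (hN5 : (5 <= N)%N) (hodd : odd N) :
  let Delta : R := Num.sqrt (N%:R * (N%:R - 4)) in
  let rho : R := (N%:R - 2 + Delta) / 2 in
  (forall x : 'I_N, degG x = (N - 3)%N) /\
  #|edgesG N| = ((N * (N - 3)) %/ 2)%N /\
  (forall (u v : 'I_N) (s : nat), ((2 * s) %% N = 1)%N ->
     let q := ((v + N - u) %% N)%N in
     let d := minn ((s * q) %% N) (N - (s * q) %% N) in
     cvgn (series (survival R u v)) /\
     hitting_time R u v = (N * (N - 3))%:R / 2 * eff_resistance R u v /\
     hitting_time R u v =
       (N * (N - 3))%:R / (Delta * (rho ^+ N + 1)) *
       (rho ^+ N - 1 + (-1) ^+ d * (rho ^+ d - rho ^+ (N - d)))).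
Proof.
case: N hN5 hodd => [|[|n]] // N_ge5 N_odd Delta rho.
split; first exact: degG_eq.
split; first exact: card_edgesG.
move=> u v s two_s q d.
have step w x := @transG_hit_fun R n s w x N_ge5 N_odd two_s.
have hit_cvg :=
  hitting_time_cvg (hit_fun_id R s v) (hit_fun_ge0 R N_ge5 s v) (step v) (u := u).
have hitE : hitting_time R u v = hit_fun R s v u by apply: cvg_lim.
split; first exact: cvgP hit_cvg.
split; last by rewrite hitE hit_funE.
have sum_deg : (\sum_(x : 'I_n.+2) degG x = n.+2 * (n.+2 - 3))%N.
  by rewrite (eq_bigr _ (fun x _ => degG_eq N_ge5 x)) sum_nat_const card_ord.
have deg_gt0 : (0 < n.+2 * (n.+2 - 3))%N.
  by rewrite muln_gt0 subn_gt0 /=; apply: ltnW.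
rewrite hitE (eff_resistance_commute (adjG_sym N_ge5) (hit_fun_id R s) step) sum_deg //.
rewrite (hit_fun_sym R N_odd s v u).
have : (n.+2 * (n.+2 - 3))%:R != 0 :> R by rewrite pnatr_eq0 -lt0n.
by move: (n.+2 * (n.+2 - 3))%:R => E E_neq0; field.
Qed.
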